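(* Let $X,Y,Z$ be topological spaces and $f:X\times Y\to Z$ a mapping. Let $\tau_f$ be the topology on $X\times Y$ generated by $f$ and the two projections $X\times Y\to X$, $X\times Y\to Y$ (the coarsest topology making these three maps continuous). Then the set $Q$ of all $(x,y)\in X\times Y$ at which $f$ is lower $X$-quasicontinuous is closed in $(X\times Y,\tau_f)$.
   Context: $f$ is lower $X$-quasicontinuous at $(a,b)$ if for each neighborhood $U$ of $a$ in $X$, each neighborhood $V$ of $b$ in $Y$, and each neighborhood $W$ of $f(a,b)$ in $Z$, there is an open set $O\subset X$ with $\emptyset\neq O\subset U$ and $f(\{x\}\times V)\cap W\neq\emptyset$ for every $x\in O$. *)

From Stdlib Require Import Classical.

Definition is_topology {T : Type} (op : (T -> Prop) -> Prop) : Prop :=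
  op (fun _ => True) /\
  (forall A B, op A -> op B -> op (fun x => A x /\ B x)) /\
  (forall F : (T -> Prop) -> Prop,
      (forall A, F A -> op A) -> op (fun x => exists A, F A /\ A x)).

Definition nbhd {T : Type} (op : (T -> Prop) -> Prop) (a : T) (U : T -> Prop) : Prop :=
  exists G, op G /\ G a /\ (forall x, G x -> U x).

Definition lower_X_quasicontinuous {X Y Z : Type}
  (opX : (X -> Prop) -> Prop) (opY : (Y -> Prop) -> Prop) (opZ : (Z -> Prop) -> Prop)
  (f : X * Y -> Z) (a : X) (b : Y) : Prop :=
  forall (U : X -> Prop) (V : Y -> Prop) (W : Z -> Prop),
    nbhd opX a U -> nbhd opY b V -> nbhd opZ (f (a, b)) W ->
    exists O : X -> Prop,
      opX O /\ (exists x, O x) /\ (forall x, O x -> U x) /\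
      (forall x, O x -> exists y, V y /\ W (f (x, y))).

Definition tau_f_subbasis {X Y Z : Type}
  (opX : (X -> Prop) -> Prop) (opY : (Y -> Prop) -> Prop) (opZ : (Z -> Prop) -> Prop)
  (f : X * Y -> Z) (S : X * Y -> Prop) : Prop :=
  (exists A, opX A /\ forall p, S p <-> A (fst p)) \/
  (exists B, opY B /\ forall p, S p <-> B (snd p)) \/
  (exists C, opZ C /\ forall p, S p <-> C (f p)).

Definition tau_f_open {X Y Z : Type}
  (opX : (X -> Prop) -> Prop) (opY : (Y -> Prop) -> Prop) (opZ : (Z -> Prop) -> Prop)
  (f : X * Y -> Z) (G : X * Y -> Prop) : Prop :=
  forall op : (X * Y -> Prop) -> Prop,
    is_topology op -> (forall S, tau_f_subbasis opX opY opZ f S -> op S) -> op G.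

Definition tau_f_closed {X Y Z : Type}
  (opX : (X -> Prop) -> Prop) (opY : (Y -> Prop) -> Prop) (opZ : (Z -> Prop) -> Prop)
  (f : X * Y -> Z) (C : X * Y -> Prop) : Prop :=
  tau_f_open opX opY opZ f (fun p => ~ C p).

From Stdlib Require Import Classical FunctionalExtensionality PropExtensionality.

(* If lower X-quasicontinuity fails at (a,b), it fails for some open U, V, W around a, b and
   f(a,b).  These stay neighbourhoods at every point of the basic tau_f-open set
   U x V /\ f^-1(W), so the same U, V, W witness the failure there: the complement of Q is a
   union of tau_f-open sets.  No property of the topologies on X, Y, Z is needed. *)

Definition generated_open {T : Type} (P : (T -> Prop) -> Prop) (G : T -> Prop) : Prop :=
  forall op, is_topology op -> (forall S, P S -> op S) -> op G.

Lemma open_equiv {T : Type} (op : (T -> Prop) -> Prop) (A B : T -> Prop) :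
  op A -> (forall p, A p <-> B p) -> op B.
Proof.
  intros HA E. replace B with A; [exact HA|].
  apply functional_extensionality; intro p; apply propositional_extensionality; apply E.
Qed.

Lemma is_topology_generated {T : Type} (P : (T -> Prop) -> Prop) :
  is_topology (generated_open P).
Proof.
  split; [|split].
  - intros op [Htop _] _; exact Htop.
  - intros A B HA HB op Hop HP.
    pose proof Hop as [_ [Hint _]]; exact (Hint _ _ (HA op Hop HP) (HB op Hop HP)).
  - intros F HF op Hop HP.
    pose proof Hop as [_ [_ Hun]]; apply Hun.
    intros A FA; exact (HF A FA op Hop HP).
Qed.

Lemma open_of_locally_open {T : Type} (op : (T -> Prop) -> Prop) (G : T -> Prop) :
  is_topology op ->
  (forall p, G p -> exists A, op A /\ A p /\ forall q, A q -> G q) -> op G.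
Proof.
  intros [_ [_ Hun]] Hloc.
  apply open_equiv with
    (A := fun p => exists A, (op A /\ forall q, A q -> G q) /\ A p).
  - apply Hun; intros A [HA _]; exact HA.
  - intro p; split.
    + intros [A [[_ AG] Ap]]; exact (AG p Ap).
    + intros Gp; destruct (Hloc p Gp) as [A [HA [Ap AG]]].
      exists A; auto.
Qed.

Section TauF.

Context {X Y Z : Type}.
Context {opX : (X -> Prop) -> Prop} {opY : (Y -> Prop) -> Prop} {opZ : (Z -> Prop) -> Prop}.
Variable f : X * Y -> Z.

Definition tau_f_box (GU : X -> Prop) (GV : Y -> Prop) (GW : Z -> Prop) (p : X * Y) : Prop :=
  GU (fst p) /\ GV (snd p) /\ GW (f p).

Lemma tau_f_open_box GU GV GW :
  opX GU -> opY GV -> opZ GW -> tau_f_open opX opY opZ f (tau_f_box GU GV GW).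
Proof.
  intros oU oV oW op Hop Hsub.
  destruct Hop as [_ [Hint _]].
  apply Hint; [|apply Hint]; apply Hsub.
  - left; exists GU; split; [exact oU|reflexivity].
  - right; left; exists GV; split; [exact oV|reflexivity].
  - right; right; exists GW; split; [exact oW|reflexivity].
Qed.

Lemma not_lower_X_quasicontinuous_box a b :
  ~ lower_X_quasicontinuous opX opY opZ f a b ->
  exists GU GV GW, opX GU /\ opY GV /\ opZ GW /\ tau_f_box GU GV GW (a, b) /\
    forall p, tau_f_box GU GV GW p ->
      ~ lower_X_quasicontinuous opX opY opZ f (fst p) (snd p).
Proof.
  intros nQ.
  apply not_all_ex_not in nQ as [U nQ].
  apply not_all_ex_not in nQ as [V nQ].
  apply not_all_ex_not in nQ as [W nQ].
  apply imply_to_and in nQ as [[GU [oU [aU sU]]] nQ].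
  apply imply_to_and in nQ as [[GV [oV [bV sV]]] nQ].
  apply imply_to_and in nQ as [[GW [oW [fW sW]]] noO].
  exists GU, GV, GW; repeat split; try assumption.
  intros [x y] [xU [yV fW']] Qxy.
  apply noO, (Qxy U V W).
  - exists GU; auto.
  - exists GV; auto.
  - exists GW; auto.
Qed.

End TauF.

Theorem mainTheorem5 (X Y Z : Type)
  (opX : (X -> Prop) -> Prop) (opY : (Y -> Prop) -> Prop) (opZ : (Z -> Prop) -> Prop)
  (hX : is_topology opX) (hY : is_topology opY) (hZ : is_topology opZ)
  (f : X * Y -> Z) :
  tau_f_closed opX opY opZ f
    (fun p => lower_X_quasicontinuous opX opY opZ f (fst p) (snd p)).
Proof.
  apply (open_of_locally_open (generated_open (tau_f_subbasis opX opY opZ f)));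
    [apply is_topology_generated|].
  intros [a b] nQ.
  destruct (not_lower_X_quasicontinuous_box f a b nQ)
    as [GU [GV [GW [oU [oV [oW [abG GnQ]]]]]]].
  exists (tau_f_box f GU GV GW); split; [|split].
  - exact (tau_f_open_box f GU GV GW oU oV oW).
  - exact abG.
  - exact GnQ.
Qed.
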